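(* Let $c>0$, $\varepsilon>0$, let $\mathcal{D}$ be a distribution over $\mathbb{R}^k_{\ge0}$ with $\mathrm{BRev}(\mathcal{D})<\infty$, let $M$ be a $c$-expensive mechanism that is oddly-priced or evenly-priced, and let $(X,Q)$ be an $\varepsilon$-representative sequence for $M,\mathcal{D}$. Then \[\mathrm{MenuGap}(X,Q)\ge\frac{\mathrm{Rev}(\mathcal{D},M)}{4(1+\varepsilon)\,\mathrm{BRev}(\mathcal{D})}.\]
   Context: Setting: one seller, one additive buyer, $k$ items; the buyer's value vector $\vec v\in\mathbb{R}^k_{\ge0}$ is drawn from a distribution $\mathcal{D}$. A mechanism $M$ is a set of options $(\vec q,p)$ with $\vec q\in[0,1]^k$, $p\in\mathbb{R}$, always containing the null option $(\vec 0,0)$; a buyer with values $\vec v$ selects an option maximizing $\vec v\cdot\vec q-p$ (ties broken arbitrarily; a maximizer is assumed to exist), and $\vec q^M(\vec v),p^M(\vec v)$ denote the allocation and price of the selected option. $\mathrm{Rev}(\mathcal{D},M)=\mathbb{E}_{\vec v\sim\mathcal{D}}[p^M(\vec v)]$; $\mathrm{BRev}(\mathcal{D})=\sup_{p\ge0} p\cdot\Pr_{\vec v\sim\mathcal{D}}[\sum_i v_i\ge p]$. A mechanism is $c$-expensive if every option other than the null option has price at least $c$; a $c$-expensive mechanism is oddly-priced (resp. evenly-priced) if every non-null option has price in $[c2^i,c2^{i+1})$ for some odd (resp. even) integer $i$. $\varepsilon$-representative sequence for $M,\mathcal{D}$: set $\vec q_0=\vec 0$; let $a=1$ if $M$ is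 oddly-priced and $a=0$ if evenly-priced; for $j\in\mathbb{N}_+$ let $B_j:=\{\vec v\in\mathrm{supp}(\mathcal{D}): p^M(\vec v)\in[c2^{2(j-1)+a},c2^{2(j-1)+a+1})\}$; for each $j$ with $B_j\neq\emptyset$ pick $\vec x_j\in B_j$ with $\|\vec x_j\|_1\le(1+\varepsilon)\|\vec v\|_1$ for all $\vec v\in B_j$, and set $\vec q_j:=\vec q^M(\vec x_j)$; indices $j$ with $B_j=\emptyset$ are omitted (later indices shifted down). $X=(\vec x_j)_{j\ge1}$, $Q=(\vec q_j)_{j\ge0}$. MenuGap: for a sequence $X=(\vec x_i)_{i=1}^N$ of nonzero points of $\mathbb{R}^k_{\ge0}$ and $Q=(\vec q_i)_{i=0}^N\subset[0,1]^k$ with $\vec q_0=\vec0$, $\mathrm{gap}_i^{X,Q}:=\min_{0\le j<i}(\vec q_i-\vec q_j)\cdot\vec x_i$ and $\mathrm{MenuGap}(X,Q):=\sum_{i=1}^N \mathrm{gap}_i^{X,Q}/\|\vec x_i\|_1$. *)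

From HB Require Import structures.
From mathcomp Require Import all_boot all_order all_algebra.
From mathcomp Require Import all_classical all_reals all_analysis.
Set Implicit Arguments. Unset Strict Implicit. Unset Printing Implicit Defensive.
Import Order.TTheory GRing.Theory Num.Theory.
Local Open Scope classical_set_scope.
Local Open Scope ring_scope.

Section Defs.
Variable R : realType.
Variable k : nat.

Definition vec := 'I_k -> R.
Definition dotv (x y : vec) : R := \sum_(i < k) x i * y i.
Definition norm1 (x : vec) : R := \sum_(i < k) `|x i|.
Definition zerov : vec := fun _ => 0.
Definition subv (x y : vec) : vec := fun i => x i - y i.

Definition option_t := (vec * R)%type.
Definition null_option : option_t := (zerov, 0).

Definition is_mechanism (M : set option_t) : Prop :=
  M null_option /\ forall o, M o -> forall i, 0 <= o.1 i <= 1.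

Definition utility (v : vec) (o : option_t) : R := dotv v o.1 - o.2.

(* (qM, pM) is the buyer's choice rule: for every v in R^k_{>=0} it selects a
   utility-maximizing option of M (ties broken arbitrarily) *)
Definition is_selection (M : set option_t) (qM : vec -> vec) (pM : vec -> R) : Prop :=
  forall v : vec, (forall i, 0 <= v i) ->
    M (qM v, pM v) /\ forall o, M o -> utility v o <= utility v (qM v, pM v).

Definition c_expensive (c : R) (M : set option_t) : Prop :=
  forall o, M o -> o <> null_option -> c <= o.2.

Definition oddly_priced (c : R) (M : set option_t) : Prop :=
  c_expensive c M /\
  forall o, M o -> o <> null_option ->
    exists i : int, odd (absz i) /\ c * 2 ^ i <= o.2 < c * 2 ^ (i + 1).

Definition evenly_priced (c : R) (M : set option_t) : Prop :=
  c_expensive c M /\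
  forall o, M o -> o <> null_option ->
    exists i : int, ~~ odd (absz i) /\ c * 2 ^ i <= o.2 < c * 2 ^ (i + 1).

(* The distribution D over R^k_{>=0} is given as the law of a random vector
   V : T -> vec on a probability space (T, P) with measurable coordinates. *)
Variables (d : measure_display) (T : measurableType d) (P : probability T R).

Definition random_vector (V : T -> vec) : Prop :=
  (forall i, measurable_fun setT (fun t => V t i)) /\ (forall t i, 0 <= V t i).

(* (closed) support of the law of V *)
Definition near_set (V : T -> vec) (x : vec) (e : R) : set T :=
  [set t | forall i, `|V t i - x i| < e].

Definition supp (V : T -> vec) : set vec :=
  [set x | forall e : R, 0 < e -> (0 < P (near_set V x e))%E].

Definition Rev (V : T -> vec) (pM : vec -> R) : \bar R :=
  (\int[P]_t (pM (V t))%:E)%E.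

Definition sum_ge (V : T -> vec) (p : R) : set T :=
  [set t | p <= \sum_(i < k) V t i].

Definition BRev (V : T -> vec) : \bar R :=
  ereal_sup [set (p%:E * P (sum_ge V p))%E | p in [set p : R | 0 <= p]].

Definition bucket (V : T -> vec) (pM : vec -> R) (c : R) (a j : nat) : set vec :=
  [set v | supp V v /\
     c * 2 ^+ (2 * (j - 1) + a) <= pM v < c * 2 ^+ (2 * (j - 1) + a + 1)].

(* index range of a sequence of length N (None = infinite): 1 <= i <= N *)
Definition in_range (N : option nat) (i : nat) : Prop :=
  (1 <= i)%N /\ match N with Some n => (i <= n)%N | None => True end.

(* (X, Q) (with X_1.., Q_0.. and length N) is an eps-representative sequence
   for M (choice rule qM, pM), D; jidx enumerates the nonempty buckets in
   increasing order (empty buckets omitted, later indices shifted down). *)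
Definition eps_rep_seq (V : T -> vec) (qM : vec -> vec) (pM : vec -> R)
    (c eps : R) (a : nat) (N : option nat) (X Q : nat -> vec) : Prop :=
  Q 0%N = zerov /\
  exists jidx : nat -> nat,
    (forall i i', in_range N i -> in_range N i' -> (i < i')%N ->
        (jidx i < jidx i')%N) /\
    (forall i, in_range N i ->
        (1 <= jidx i)%N /\
        bucket V pM c a (jidx i) (X i) /\
        (forall v, bucket V pM c a (jidx i) v -> norm1 (X i) <= (1 + eps) * norm1 v) /\
        Q i = qM (X i)) /\
    (forall j, (1 <= j)%N -> bucket V pM c a j !=set0 ->
        exists i, in_range N i /\ jidx i = j).

End Defs.

Section MenuGapDef.
Variables (R : realType) (k : nat).

Definition gap (X Q : nat -> vec R k) (i : nat) : R :=
  \big[Num.min/dotv (subv (Q i) (Q 0%N)) (X i)]_(j < i)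
     dotv (subv (Q i) (Q j)) (X i).

Definition MenuGap (N : option nat) (X Q : nat -> vec R k) : \bar R :=
  match N with
  | Some n => (\sum_(1 <= i < n.+1) (gap X Q i / norm1 (X i)))%:E
  | None => (\sum_(1 <= i <oo) (gap X Q i / norm1 (X i))%:E)%E
  end.

End MenuGapDef.

From HB Require Import structures.
From mathcomp Require Import all_boot all_order all_algebra.
From mathcomp Require Import all_classical all_reals all_analysis.
From mathcomp Require Import ring lra zify measurable_realfun.
Import Order.TTheory GRing.Theory Num.Theory.
Local Open Scope classical_set_scope.
Local Open Scope ring_scope.
Set Implicit Arguments.
Unset Strict Implicit.

(* Consecutive nonempty buckets are at least a factor 4 apart in price, so the
   incentive constraint of [x_i] against every earlier [x_j] leaves a gap of at
   least half the price floor [L_i] of the bucket of [x_i].  Conversely, a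
   buyer of the support with positive price falls in the bucket of some [x_i],
   pays less than [2 L_i] and, by the choice of [x_i], has value sum at least
   [|x_i|_1 / (1 + eps)].  Hence
     Rev <= sum_i 2 L_i Pr[sum v >= |x_i|_1 / (1 + eps)]
         <= sum_i 2 L_i (1 + eps) BRev / |x_i|_1
         <= 4 (1 + eps) BRev MenuGap. *)

Section Vectors.
Variables (R : realType) (k : nat).
Implicit Types (u w x q : vec R k).

Definition nonneg x := forall i, 0 <= x i.

Lemma dotv_subv u w x : dotv (subv u w) x = dotv x u - dotv x w.
Proof. by rewrite /dotv /subv -sumrB; apply: eq_bigr => i _; ring. Qed.

Lemma dotv0 x : dotv x (@zerov R k) = 0.
Proof. by rewrite /dotv big1 // => i _; rewrite mulr0. Qed.

Lemma norm1_nonneg x : nonneg x -> norm1 x = \sum_(i < k) x i.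
Proof. by move=> x0; apply: eq_bigr => i _; rewrite ger0_norm. Qed.

Lemma dotv_le_norm1 x q : nonneg x -> (forall i, 0 <= q i <= 1) ->
  dotv x q <= norm1 x.
Proof.
move=> x0 q01; rewrite /dotv /norm1; apply: ler_sum => i _.
by rewrite ger0_norm //; have /andP[_ q1] := q01 i; rewrite ler_piMr.
Qed.

Lemma rat_box_approx x (e : R) : 0 < e ->
  exists (y : {ffun 'I_k -> rat}) (n : nat),
    (forall i, `|x i - ratr (y i)| < n.+1%:R^-1) /\
    forall z : vec R k, (forall i, `|z i - ratr (y i)| < n.+1%:R^-1) ->
      forall i, `|z i - x i| < e.
Proof.
move=> e0; have [n] : exists n : nat, 0 + n.+1%:R^-1 < e / 2.
  by apply: ltr_add_invr; rewrite divr_gt0.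
rewrite add0r; set r := n.+1%:R^-1 => re.
have r0 : 0 < r by rewrite invr_gt0.
have /fin_all_exists [q qx] : forall i : 'I_k,
    exists q : rat, ratr q \in `]x i - r, x i + r[.
  by move=> i; apply: rat_in_itvoo; rewrite ltrD2l gtrN.
exists [ffun i => q i], n; split => [i|z zy i]; rewrite ?ffunE;
  have := qx i; rewrite in_itv /= => /andP[qx1 qx2].
  by rewrite ltr_distlC qx1 qx2.
have := zy i; rewrite ffunE -/r => zqi.
have qxi : `|ratr (q i) - x i| < r by rewrite distrC ltr_distlC qx1 qx2.
rewrite (le_lt_trans (ler_distD (ratr (q i)) _ _)) //; lra.
Qed.

End Vectors.

Section Support.
Variables (R : realType) (k : nat) (d : measure_display) (T : measurableType d).
Variables (P : probability T R) (V : T -> vec R k).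

Lemma supp_nonneg x : (forall t i, 0 <= V t i) -> supp P V x -> nonneg x.
Proof.
move=> V0 suppx i; rewrite leNgt; apply/negP => xi0.
have /suppx : 0 < - x i by rewrite oppr_gt0.
suff -> : near_set V x (- x i) = set0 by rewrite measure0 ltxx.
apply/seteqP; split => t //= /(_ i); rewrite ltNge => /negP; apply.
by rewrite ger0_norm ?lerDr ?subr_ge0 ?(le_trans (ltW xi0)) ?V0.
Qed.

Lemma BRev_ge0 : (0 <= BRev P V)%E.
Proof. by apply: (@ereal_sup_ubound _ _ 0%E); exists 0 => //=; rewrite mul0e. Qed.

Lemma BRev_fineE : (BRev P V < +oo)%E -> BRev P V = (fine (BRev P V))%:E.
Proof. by move=> BRev_fin; rewrite fineK // ge0_fin_numE ?BRev_ge0. Qed.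

Hypothesis mV : forall i, measurable_fun setT (fun t => V t i).

Lemma measurable_near_set x e : measurable (near_set V x e).
Proof.
have -> : near_set V x e =
    \bigcap_(i in [set: 'I_k]) [set t | `|V t i - x i| < e].
  by apply/seteqP; split => t /= Vt i; [move=> _|]; exact: Vt.
apply: fin_bigcap_measurable; first exact: finite_finset.
move=> i _; have mVi : measurable_fun setT (fun t => `|V t i - x i|).
  by apply: measurableT_comp => //; apply: measurable_funB.
have := mVi measurableT _ (measurable_itv `]-oo, e[).
by rewrite setTI; congr measurable; apply/seteqP; split => t /=; rewrite in_itv.
Qed.

Lemma measurable_sum_ge p : measurable (sum_ge V p).
Proof.
rewrite /sum_ge -[X in measurable X]setTI.
apply: (measurable_fun_le (f := fun _ => p)) => //.
by apply: measurable_sum => i; exact: mV.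
Qed.

(* A point outside the support has a null box around it, and each such box
   contains a null box with rational centre and radius [1/(n+1)]; there are
   countably many of those. *)
Lemma supp_ae : P.-negligible (~` [set t | supp P V (V t)]).
Proof.
pose box (y : {ffun 'I_k -> rat}) (n : nat) :=
  near_set V (fun i => ratr (y i)) n.+1%:R^-1.
pose null_box m : set T :=
  if unpickle m is Some (y, n) then
    if P (box y n) == 0%E then box y n else set0
  else set0.
apply: (@negligibleS _ _ _ _ (\bigcup_m null_box m)); last first.
  apply: negligible_bigcup => m; rewrite /null_box.
  case: (unpickle m) => [[y n]|]; last exact: negligible_set0.
  case: eqP => [Pbox|_]; last exact: negligible_set0.
  by exists (box y n); split => //; exact: measurable_near_set.
move=> t /= /not_forallP /contrapT [e /not_implyP [e0 /negP]].
rewrite -leNgt => Pe.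
have [y [n [Vty box_sub]]] := rat_box_approx (V t) e0.
exists (pickle (y, n)) => //; rewrite /null_box pickleK.
suff -> : P (box y n) == 0%E by exact: Vty.
rewrite eq_le measure_ge0 andbT (le_trans _ Pe) // le_measure // ?inE;
  try exact: measurable_near_set.
by move=> s /= box_s; exact: box_sub.
Qed.

End Support.

Definition bucket_floor (R : realType) (c : R) (a j : nat) : R :=
  c * 2 ^+ (2 * (j - 1) + a).

Section Buckets.
Variables (R : realType) (c : R) (a : nat).
Hypothesis c_gt0 : 0 < c.

Lemma bucket_floor_gt0 j : 0 < bucket_floor c a j.
Proof. by rewrite mulr_gt0 // exprn_gt0. Qed.

Lemma bucket_ceilE j :
  c * 2 ^+ (2 * (j - 1) + a + 1) = 2 * bucket_floor c a j.
Proof. by rewrite addn1 exprS mulrCA. Qed.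

Lemma bucket_floor_gap j j' : (1 <= j)%N -> (j < j')%N ->
  4 * bucket_floor c a j <= bucket_floor c a j'.
Proof.
move=> j1 jj'; rewrite /bucket_floor mulrCA ler_pM2l //.
have -> : (2 * (j' - 1) + a = 2 * (j - 1) + a + 2 + 2 * (j' - 1 - j))%N by lia.
rewrite !exprD (_ : (2 : R) ^+ 2 = 4); last by rewrite expr2; lra.
rewrite mulrC mulrA ler_peMr ?mulr_ge0 ?exprn_ge0 ?exprn_ege1 ?ler1n //.
by rewrite -!exprD exprn_ege1 ?ler1n.
Qed.

(* Negative exponents are excluded by [c <= p]. *)
Lemma dyadic_interval_bucket (p : R) (z : int) : (a <= 1)%N -> c <= p ->
  odd (absz z) = (a == 1%N) -> c * 2 ^ z <= p < c * 2 ^ (z + 1) ->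
  exists2 j, (1 <= j)%N & bucket_floor c a j <= p < 2 * bucket_floor c a j.
Proof.
move=> a1 cp; case: z => [m|m] odd_m.
  rewrite -PoszD /= => pm; exists (m./2 + 1)%N; first by rewrite addn1.
  rewrite -bucket_ceilE /bucket_floor.
  suff -> : (2 * (m./2 + 1 - 1) + a)%N = m by [].
  have -> : a = odd m by rewrite odd_m; case: (a) a1 => [|[|]].
  by rewrite addnK addnC mul2n odd_double_half.
move=> /andP[_ pm]; exfalso; move: cp; apply/negP; rewrite -ltNge.
apply: (lt_le_trans pm); rewrite ger_pMr //.
rewrite NegzE (_ : - (Posz m.+1) + 1 = - (Posz m)); last first.
  by rewrite -addn1 PoszD opprD addrK.
by rewrite -exprnN invf_le1 ?exprn_ege1 ?exprn_gt0 ?ler1n.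
Qed.

End Buckets.

Section Mechanism.
Variables (R : realType) (k : nat) (M : set (option_t R k)).
Variables (qM : vec R k -> vec R k) (pM : vec R k -> R) (c : R) (a : nat).
Hypotheses (c_gt0 : 0 < c) (mechM : is_mechanism M).
Hypotheses (selM : is_selection M qM pM) (expM : c_expensive c M).
Implicit Types v w : vec R k.

Lemma selection_IC v w : nonneg v -> nonneg w ->
  dotv v (qM w) - pM w <= dotv v (qM v) - pM v.
Proof.
by move=> v0 w0; have [_ optv] := selM v0; exact: optv (proj1 (selM w0)).
Qed.

Lemma price_le_dotv v : nonneg v -> pM v <= dotv v (qM v).
Proof.
move=> v0; have [_ /(_ (null_option R k) (proj1 mechM))] := selM v0.
by rewrite /utility /= dotv0 subr0 subr_ge0.
Qed.

Lemma alloc_in01 v : nonneg v -> forall i, 0 <= qM v i <= 1.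
Proof. by move=> v0; exact: (proj2 mechM (qM v, pM v) (proj1 (selM v0))). Qed.

Lemma price_eq0_or_ge v : nonneg v -> pM v = 0 \/ c <= pM v.
Proof.
move=> v0; have [Mv _] := selM v0.
have [[_ ->]|not_null] := pselect ((qM v, pM v) = null_option R k); first by left.
by right; exact: expM Mv not_null.
Qed.

Lemma price_ge0 v : nonneg v -> 0 <= pM v.
Proof. by move=> /price_eq0_or_ge [->//|]; apply/le_trans/ltW. Qed.

Hypothesis parityM :
  (a = 1%N /\ oddly_priced c M) \/ (a = 0%N /\ evenly_priced c M).

Lemma price_in_bucket v : nonneg v -> pM v != 0 ->
  exists2 j, (1 <= j)%N &
    bucket_floor c a j <= pM v < 2 * bucket_floor c a j.
Proof.
move=> v0 pv0; have [Mv _] := selM v0.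
have not_null : (qM v, pM v) <> null_option R k.
  by move=> [_ pv]; rewrite pv eqxx in pv0.
have a1 : (a <= 1)%N by case: parityM => [[->]|[->]].
have [z odd_z pz] : exists2 z : int, odd (absz z) = (a == 1%N) &
    c * 2 ^ z <= pM v < c * 2 ^ (z + 1).
  case: parityM => [[-> [_ parM]]|[-> [_ parM]]];
    have [z [odd_z pz]] := parM _ Mv not_null; exists z => //.
  exact/negbTE.
exact: dyadic_interval_bucket (expM Mv not_null) odd_z pz.
Qed.

End Mechanism.

Definition in_rangeb (N : option nat) (i : nat) : bool :=
  (1 <= i)%N && (if N is Some n then (i <= n)%N else true).

Lemma in_rangeP N i : reflect (in_range N i) (in_rangeb N i).
Proof. by case: N => [n|]; apply: (iffP andP) => -[]. Qed.

Lemma in_range_le N i j : in_range N i -> (0 < j <= i)%N -> in_range N j.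
Proof. by case: N => [n|] [_ iN] /andP[j0 ji]; split => //; lia. Qed.

Section MenuGapSeries.
Variables (R : realType) (k : nat) (N : option nat) (X Q : nat -> vec R k).

Definition menu_term (n : nat) : R :=
  if in_rangeb N n then gap X Q n / norm1 (X n) else 0.

Lemma menu_term_seriesE : (forall n, 0 <= menu_term n) ->
  (\sum_(n <oo) (menu_term n)%:E)%E = MenuGap N X Q.
Proof.
move=> term0; have term00 : menu_term 0 = 0 by [].
rewrite /MenuGap; case EN : N => [n|].
  rewrite (nneseries_split _ n.+1) => [|m _]; last by rewrite lee_fin.
  rewrite eseries0 ?adde0 => [|m nm _]; last first.
    by rewrite /menu_term /in_rangeb EN; case: ifP => //; lia.
  rewrite add0n sumEFin big_ltn // term00 add0r; congr EFin.
  apply: eq_big_nat => i /andP[i1 iN].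
  by rewrite /menu_term /in_rangeb EN i1 /=; case: ifP => //; lia.
rewrite (nneseries_split _ 1) => [|m _]; last by rewrite lee_fin.
rewrite add0n big_nat1 term00 add0e.
apply/congr_lim/funext => m; apply: eq_big_nat => i /andP[i1 _].
by rewrite /menu_term /in_rangeb EN i1.
Qed.

End MenuGapSeries.

Section ScaledIndicators.
Variables (d : measure_display) (T : measurableType d) (R : realType).
Variables (C : nat -> R) (A : nat -> set T).
Hypotheses (C_ge0 : forall n, 0 <= C n) (mA : forall n, measurable (A n)).

Lemma scaled_indic_ge0 n t : (0 <= (C n * \1_(A n) t)%:E)%E.
Proof. by rewrite lee_fin mulr_ge0 // indicE; case: (_ \in _). Qed.

Lemma measurable_scaled_indic n :
  measurable_fun setT (fun t => (C n * \1_(A n) t)%:E).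
Proof.
by apply/measurable_EFinP/measurable_funM => //; exact: measurable_indic.
Qed.

Lemma integral_series_indic (mu : {measure set T -> \bar R}) :
  (\int[mu]_t (\sum_(n <oo) (C n * \1_(A n) t)%:E) =
   \sum_(n <oo) ((C n)%:E * mu (A n)))%E.
Proof.
rewrite integral_nneseries //; last first.
- by move=> n t _; exact: scaled_indic_ge0.
- by move=> n; exact: measurable_scaled_indic.
apply: eq_eseriesr => n _; under eq_integral do rewrite EFinM.
rewrite ge0_integralZl_EFin ?integral_indic ?setIT //.
exact/measurable_EFinP/measurable_indic.
Qed.

End ScaledIndicators.

Lemma lee_divl_mulr (R : realType) (r : R) (x y : \bar R) :
  0 <= r -> (0 <= x)%E -> (0 <= y)%E -> (x <= r%:E * y)%E -> (x / r%:E <= y)%E.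
Proof.
move=> r0 x0 y0 xry; have [r_eq0|rn0] := eqVneq r 0.
  (* [x / 0%:E] is [x * +oo], which is [0] for [x = 0]. *)
  have x_eq0 : x = 0%E.
    by apply/le_anti; rewrite x0 andbT; move: xry; rewrite r_eq0 mul0e.
  by rewrite x_eq0 mul0e.
have r_gt0 : 0 < r by rewrite lt_neqAle eq_sym rn0.
by rewrite inver (negbTE rn0) lee_pdivrMr // muleC.
Qed.

Section RepresentativeSequence.
Variables (R : realType) (k : nat) (d : measure_display) (T : measurableType d).
Variables (P : probability T R) (V : T -> vec R k).
Variables (M : set (option_t R k)) (qM : vec R k -> vec R k) (pM : vec R k -> R).
Variables (c eps : R) (a : nat) (N : option nat) (X Q : nat -> vec R k).
Variable jidx : nat -> nat.
Hypotheses (c_gt0 : 0 < c) (eps_gt0 : 0 < eps) (V_ge0 : forall t i, 0 <= V t i).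
Hypotheses (mechM : is_mechanism M) (selM : is_selection M qM pM).
Hypothesis expM : c_expensive c M.
Hypothesis Q0 : Q 0%N = @zerov R k.
Hypothesis jidx_incr : forall i i', in_range N i -> in_range N i' ->
  (i < i')%N -> (jidx i < jidx i')%N.
Hypothesis jidx_spec : forall i, in_range N i ->
  (1 <= jidx i)%N /\ bucket P V pM c a (jidx i) (X i) /\
  (forall v, bucket P V pM c a (jidx i) v ->
     norm1 (X i) <= (1 + eps) * norm1 v) /\
  Q i = qM (X i).
Hypothesis jidx_onto : forall j, (1 <= j)%N -> bucket P V pM c a j !=set0 ->
  exists i, in_range N i /\ jidx i = j.

Local Notation floor_of i := (bucket_floor c a (jidx i)).

Lemma rep_nonneg i : in_range N i -> nonneg (X i).
Proof. by move=> /jidx_spec [_ [[suppX _] _]]; exact: supp_nonneg suppX. Qed.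

Lemma rep_price i : in_range N i -> floor_of i <= pM (X i) < 2 * floor_of i.
Proof. by move=> /jidx_spec [_ [[_ pX] _]]; rewrite -bucket_ceilE. Qed.

Lemma rep_dotv i : in_range N i -> floor_of i <= dotv (X i) (Q i).
Proof.
move=> iN; have [_ [_ [_ ->]]] := jidx_spec iN.
have /andP[floor_le _] := rep_price iN.
exact: le_trans floor_le (price_le_dotv mechM selM (rep_nonneg iN)).
Qed.

Lemma rep_norm1_gt0 i : in_range N i -> 0 < norm1 (X i).
Proof.
move=> iN; apply: lt_le_trans (bucket_floor_gt0 a c_gt0 (jidx i)) _.
apply: le_trans (rep_dotv iN) _; have [_ [_ [_ ->]]] := jidx_spec iN.
exact: dotv_le_norm1 (rep_nonneg iN) (alloc_in01 mechM selM (rep_nonneg iN)).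
Qed.

(* [x_i] prefers its own option to that of [x_j], whose price is below
   [2 * floor_of j <= floor_of i / 2]. *)
Lemma rep_gap_against i j : in_range N i -> (j < i)%N ->
  floor_of i / 2 <= dotv (subv (Q i) (Q j)) (X i).
Proof.
move=> iN ji; have floor_gt0 := bucket_floor_gt0 a c_gt0 (jidx i).
rewrite dotv_subv; case: j ji => [_|j ji].
  by rewrite Q0 dotv0 subr0; apply: le_trans (rep_dotv iN); lra.
have jN : in_range N j.+1 by apply: in_range_le iN _; lia.
have [_ [_ [_ ->]]] := jidx_spec iN; have [j1 [_ [_ ->]]] := jidx_spec jN.
have IC := selection_IC selM (rep_nonneg iN) (rep_nonneg jN).
have /andP[price_i _] := rep_price iN; have /andP[_ price_j] := rep_price jN.
have := bucket_floor_gap a c_gt0 j1 (jidx_incr jN iN ji).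
lra.
Qed.

Lemma rep_gap i : in_range N i -> floor_of i / 2 <= gap X Q i.
Proof.
move=> iN; apply: (big_ind (fun g => floor_of i / 2 <= g)).
- exact: rep_gap_against iN (proj1 iN).
- by move=> g g' gi g'i; rewrite le_min gi g'i.
- by move=> j _; exact: rep_gap_against iN (ltn_ord j).
Qed.

Lemma rep_menu_term_ge0 n : 0 <= menu_term N X Q n.
Proof.
rewrite /menu_term; case: in_rangeP => // nN.
rewrite divr_ge0 ?(ltW (rep_norm1_gt0 nN)) //; apply: le_trans (rep_gap nN).
by rewrite divr_ge0 // ltW // bucket_floor_gt0.
Qed.

Lemma Rev_ge0 : (0 <= Rev P V pM)%E.
Proof.
by apply: integral_ge0 => t _; rewrite lee_fin (price_ge0 c_gt0 selM expM (V_ge0 t)).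
Qed.

Lemma MenuGap_ge0 : (0 <= MenuGap N X Q)%E.
Proof.
rewrite -menu_term_seriesE; last exact: rep_menu_term_ge0.
by apply: nneseries_ge0 => n _ _; rewrite lee_fin rep_menu_term_ge0.
Qed.

Let cover_weight n := if in_rangeb N n then 2 * floor_of n else 0.
Let cover_event n := sum_ge V (norm1 (X n) / (1 + eps)).

Lemma cover_weight_ge0 n : 0 <= cover_weight n.
Proof.
rewrite /cover_weight; case: ifP => // _.
by rewrite mulr_ge0 // ltW ?bucket_floor_gt0.
Qed.

Hypothesis parityM :
  (a = 1%N /\ oddly_priced c M) \/ (a = 0%N /\ evenly_priced c M).

Lemma price_le_cover t : supp P V (V t) ->
  ((pM (V t))%:E <= \sum_(n <oo) (cover_weight n * \1_(cover_event n) t)%:E)%E.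
Proof.
move=> suppVt; have Vt0 : nonneg (V t) := V_ge0 t.
have cover0 n := scaled_indic_ge0 cover_event cover_weight_ge0 n t.
have [->|pt0] := eqVneq (pM (V t)) 0.
  by apply: nneseries_ge0 => n _ _; exact: cover0.
have [j j1 pj] := price_in_bucket c_gt0 selM expM parityM Vt0 pt0.
have Bj : bucket P V pM c a j (V t) by split => //; rewrite bucket_ceilE.
have [i [iN ji]] := jidx_onto j1 (ex_intro _ (V t) Bj).
apply: le_trans (nneseries_lim_ge i.+1 (fun n _ _ => cover0 n)).
rewrite big_nat_recr //=; apply: lee_paddl.
  by apply: sume_ge0 => n _; exact: cover0.
have event_i : cover_event i t.
  rewrite /cover_event /sum_ge /= ler_pdivrMr ?addr_gt0 // -norm1_nonneg //.
  by rewrite mulrC; have [_ [_ [-> //]]] := jidx_spec iN; rewrite ji.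
rewrite /cover_weight (introT (in_rangeP _ _) iN) indicE mem_set // mulr1.
by rewrite lee_fin ji ltW //; case/andP: pj.
Qed.

Hypothesis mV : forall i, measurable_fun setT (fun t => V t i).
Hypothesis mpM : measurable_fun setT (fun t => pM (V t)).

Lemma Rev_le_cover :
  (Rev P V pM <= \sum_(n <oo) ((cover_weight n)%:E * P (cover_event n)))%E.
Proof.
have m_event n : measurable (cover_event n) by exact: measurable_sum_ge.
have cover0 := scaled_indic_ge0 cover_event cover_weight_ge0.
rewrite -(integral_series_indic cover_weight_ge0 m_event).
apply: ae_ge0_le_integral => //.
- by move=> t _; rewrite lee_fin (price_ge0 c_gt0 selM expM (V_ge0 t)).
- exact/measurable_EFinP.
- by move=> t _; apply: nneseries_ge0 => n _ _; exact: cover0.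
- apply: ge0_emeasurable_sum => [n t _ _|n _]; first exact: cover0.
  exact: measurable_scaled_indic.
suff cover_ae : P.-negligible (~` [set t | [set: T] t ->
    ((pM (V t))%:E <= \sum_(n <oo) (cover_weight n * \1_(cover_event n) t)%:E)%E]).
  exact: cover_ae.
apply: negligibleS (supp_ae P mV) => t /= not_le suppVt.
by apply: not_le => _; exact: price_le_cover.
Qed.

Hypothesis BRev_fin : (BRev P V < +oo)%E.
Let b := fine (BRev P V).

(* The grand bundle at price [norm1 (x_n) / (1 + eps)] earns at most [BRev]. *)
Lemma cover_term_le n : ((cover_weight n)%:E * P (cover_event n) <=
  (4 * (1 + eps) * b * menu_term N X Q n)%:E)%E.
Proof.
rewrite /cover_weight /menu_term.
case: in_rangeP => nN; last by rewrite mul0e mulr0.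
have m_event : measurable (cover_event n) by exact: measurable_sum_ge.
have Pfin : P (cover_event n) = (fine (P (cover_event n)))%:E.
  rewrite fineK // ge0_fin_numE ?measure_ge0 //.
  by rewrite (le_lt_trans (probability_le1 P m_event)) ?ltey.
have bundle_le : ((norm1 (X n) / (1 + eps))%:E * P (cover_event n) <= b%:E)%E.
  rewrite -BRev_fineE //; apply: ereal_sup_ubound.
  exists (norm1 (X n) / (1 + eps)) => //=.
  by rewrite divr_ge0 ?(ltW (rep_norm1_gt0 nN)) // addr_ge0 // ltW.
move: bundle_le; rewrite Pfin -!EFinM !lee_fin mulrAC ler_pdivrMr ?addr_gt0 //.
set p := fine _ => bundle_le; have p0 : 0 <= p by rewrite fine_ge0 // measure_ge0.
have gap_n := rep_gap nN; have X0 := rep_norm1_gt0 nN.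
have floor_gt0 := bucket_floor_gt0 a c_gt0 (jidx n).
rewrite mulrA ler_pdivlMr //.
have pX0 : 0 <= p * norm1 (X n) by rewrite mulr_ge0 // ltW.
nra.
Qed.

Lemma Rev_le_MenuGap :
  (Rev P V pM <= (4 * (1 + eps) * b)%:E * MenuGap N X Q)%E.
Proof.
rewrite -menu_term_seriesE; last exact: rep_menu_term_ge0.
rewrite -nneseriesZl => [|n _]; last by rewrite lee_fin rep_menu_term_ge0.
apply: le_trans Rev_le_cover _; apply: lee_nneseries => [n _ _|n _].
  by rewrite mule_ge0 ?lee_fin ?cover_weight_ge0.
by rewrite -EFinM; exact: cover_term_le.
Qed.

End RepresentativeSequence.

Unset Implicit Arguments.

Theorem proposition4p6 (R : realType) (k : nat)
  (d : measure_display) (T : measurableType d) (P : probability T R)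
  (V : T -> vec R k)
  (M : set (option_t R k)) (qM : vec R k -> vec R k) (pM : vec R k -> R)
  (c eps : R) (a : nat) (N : option nat) (X Q : nat -> vec R k) :
  0 < c -> 0 < eps ->
  random_vector V ->
  (BRev P V < +oo)%E ->
  is_mechanism M ->
  is_selection M qM pM ->
  measurable_fun setT (fun t => pM (V t)) ->
  c_expensive c M ->
  ((a = 1%N /\ oddly_priced c M) \/ (a = 0%N /\ evenly_priced c M)) ->
  eps_rep_seq P V qM pM c eps a N X Q ->
  (Rev P V pM / ((4 * (1 + eps))%:E * BRev P V) <= MenuGap N X Q)%E.
Proof.
move=> c_gt0 eps_gt0 [mV V_ge0] BRev_fin mechM selM mpM expM parityM.
move=> [Q0 [jidx [jidx_incr [jidx_spec jidx_onto]]]].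
rewrite (BRev_fineE BRev_fin) -EFinM; apply: lee_divl_mulr.
- by rewrite mulr_ge0 ?fine_ge0 ?BRev_ge0 // mulr_ge0 // addr_ge0 // ltW.
- exact: Rev_ge0 c_gt0 V_ge0 selM expM.
- exact: MenuGap_ge0 c_gt0 eps_gt0 V_ge0 mechM selM Q0 jidx_incr jidx_spec.
- exact: Rev_le_MenuGap c_gt0 eps_gt0 V_ge0 mechM selM expM Q0
    jidx_incr jidx_spec jidx_onto parityM mV mpM BRev_fin.
Qed.
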